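(* Let $p$ be a prime, and let $H,H_1,\dots,H_r$ be subspaces of $\mathbb F_p^k$ with $H=H_1\cap\dots\cap H_r$. Then there exists $i\in[r]$ such that $\mu(H_i)\ge\mu(H)$.
   Context: For $x\in\mathbb F_p^k$, $|x|$ is the number of nonzero coordinates, and $V^\perp$ is the orthogonal complement under the standard dot product. For a proper subspace $H<\mathbb F_p^k$, \[ \mu(H)=\max_{W>H,\ \dim W=\dim H+1}\ \min_{v\in H^\perp\setminus W^\perp}|v|, \] and $\mu(\mathbb F_p^k)=0$. *)

From HB Require Import structures.
From mathcomp Require Import all_boot all_order all_algebra.
Set Implicit Arguments. Unset Strict Implicit. Unset Printing Implicit Defensive.
Import GRing.Theory.
Local Open Scope ring_scope.

(* Subspaces of F^k are represented as row spaces of square k x k matrices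
   (mxalgebra), vectors of F^k as row vectors 'rV[F]_k. *)

Definition hweight (F : fieldType) (k : nat) (x : 'rV[F]_k) : nat :=
  #|[set i : 'I_k | x 0 i != 0]|.

(* v lies in the orthogonal complement H^perp for the standard dot product
   (v . h = v *m h^T); this is independent of the matrix representing H. *)
Definition in_perp (F : fieldType) (k : nat) (H : 'M[F]_k) (v : 'rV[F]_k) : bool :=
  v *m H^T == 0.

Definition mu (F : finFieldType) (k : nat) (H : 'M[F]_k) : nat :=
  if \rank H == k then 0%N
  else \max_(W : 'M[F]_k | ((H < W)%MS && (\rank W == (\rank H).+1)))
         \big[minn/k]_(v : 'rV[F]_k | in_perp H v && ~~ in_perp W v) hweight v.

From HB Require Import structures.
From mathcomp Require Import all_boot all_order all_algebra.
Set Implicit Arguments. Unset Strict Implicit. Unset Printing Implicit Defensive.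
Import Order.TTheory GRing.Theory.
Local Open Scope ring_scope.

(* Let W ⊃ H = H_1 ∩ ... ∩ H_r with dim W = dim H + 1 and pick w ∈ W \ H.
   Then w ∉ H_i for some i, and W_i := H_i + <w> has dim W_i = dim H_i + 1.
   Since H ⊆ H_i and w ∈ W, every v ∈ H_i^⊥ \ W_i^⊥ lies in H^⊥ \ W^⊥, so the
   minimal weight over H^⊥ \ W^⊥ is at most the one over H_i^⊥ \ W_i^⊥, which
   is at most mu(H_i).  Hence mu(H) <= max_i mu(H_i). *)

Definition min_weight (F : finFieldType) (k : nat) (H W : 'M[F]_k) : nat :=
  \big[minn/k]_(v : 'rV[F]_k | in_perp H v && ~~ in_perp W v) hweight v.

Section Orthogonality.

Variables (F : fieldType) (k : nat).

Lemma perp_submx m1 m2 (A : 'M[F]_(m1, k)) (B : 'M[F]_(m2, k)) (v : 'rV[F]_k) :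
  (B <= A)%MS -> v *m A^T = 0 -> v *m B^T = 0.
Proof. by case/submxP=> X -> vA0; rewrite trmx_mul mulmxA vA0 mul0mx. Qed.

Lemma perp_addsmx m1 m2 (A : 'M[F]_(m1, k)) (B : 'M[F]_(m2, k)) (v : 'rV[F]_k) :
  v *m A^T = 0 -> v *m B^T = 0 -> v *m (A + B)%MS^T = 0.
Proof.
move=> vA0 vB0; apply: (@perp_submx _ _ (col_mx A B)); first by rewrite addsmxE.
by rewrite tr_col_mx mul_mx_row vA0 vB0 row_mx0.
Qed.

Lemma in_perpS (H K : 'M[F]_k) (v : 'rV[F]_k) :
  (K <= H)%MS -> in_perp H v -> in_perp K v.
Proof. by move=> sKH /eqP vH0; apply/eqP; apply: perp_submx vH0. Qed.

End Orthogonality.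

Lemma mxrank_addsmx_notsub (F : fieldType) m n (A : 'M[F]_(m, n)) (w : 'rV[F]_n) :
  ~~ (w <= A)%MS -> \rank (A + w)%MS = (\rank A).+1.
Proof.
move=> wA; apply/eqP; rewrite eqn_leq; apply/andP; split.
  apply: leq_trans (mxrank_adds_leqif A w) _.
  by rewrite -[(\rank A).+1]addn1 leq_add2l rank_leq_row.
have sA := addsmxSl A w; rewrite ltn_neqAle (mxrank_leqif_sup sA).2 mxrankS //.
rewrite andbT; apply: contra wA; exact: submx_trans (addsmxSr A w).
Qed.

Lemma bigcapmx_notsub (F : fieldType) (I : finType) n (A_ : I -> 'M[F]_n)
    (w : 'rV[F]_n) :
  ~~ (w <= \bigcap_i A_ i)%MS -> exists i, ~~ (w <= A_ i)%MS.
Proof.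
move=> wA; apply/existsP; apply: contraNT wA => /existsPn no_i.
by apply/sub_bigcapmxP=> i _; apply: negbNE (no_i i).
Qed.

Section MinWeight.

Variables (F : finFieldType) (k : nat).
Implicit Types H W : 'M[F]_k.

Lemma leq_mu H W :
  (H < W)%MS -> \rank W = (\rank H).+1 -> (min_weight H W <= mu H)%N.
Proof.
move=> ltHW rW; have rHk : \rank H != k by rewrite neq_ltn -rW rank_leq_col.
by rewrite /mu (negbTE rHk) (leq_bigmax_cond W) // ltHW rW eqxx.
Qed.

Lemma mu_leq H n :
  (forall W, (H < W)%MS -> \rank W = (\rank H).+1 -> (min_weight H W <= n)%N) ->
  (mu H <= n)%N.
Proof.
move=> le_n; rewrite /mu; case: ifP => // _.
by apply/bigmax_leqP=> W /andP[ltHW /eqP]; apply: le_n.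
Qed.

Lemma min_weight_addsmx_leq_mu H (w : 'rV[F]_k) :
  ~~ (w <= H)%MS -> (min_weight H (H + w)%MS <= mu H)%N.
Proof.
move=> wH; apply: leq_mu; last exact: mxrank_addsmx_notsub.
by rewrite ltmxErank addsmxSl (mxrank_addsmx_notsub wH) ltnSn.
Qed.

Lemma min_weight_extend H H' W (w : 'rV[F]_k) :
  (H <= H')%MS -> (w <= W)%MS ->
  (min_weight H W <= min_weight H' (H' + w)%MS)%N.
Proof.
move=> sHH' swW; rewrite /min_weight -minEnat; apply: (sub_bigmin (T := nat)).
move=> v /andP[vH' vH'w]; rewrite (in_perpS sHH' vH') /=.
apply: contra vH'w => /eqP vW0; apply/eqP.
by apply: perp_addsmx (eqP vH') (perp_submx swW vW0).
Qed.

Lemma mu_bigcap_leq_max (r : nat) H (Hs : 'I_r -> 'M[F]_k) :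
  (H == \bigcap_(i < r) Hs i)%MS -> (mu H <= \max_(i < r) mu (Hs i))%N.
Proof.
move/eqmxP=> defH; apply: mu_leq => W ltHW _.
have [j wH] := row_subPn (proj2 (andP ltHW)).
have [i wHi] : exists i, ~~ (row j W <= Hs i)%MS.
  by apply: bigcapmx_notsub; rewrite -defH.
apply: leq_trans (leq_bigmax i).
apply: leq_trans (min_weight_addsmx_leq_mu wHi).
by apply: min_weight_extend (row_sub j W); rewrite defH (bigcapmx_inf i).
Qed.

End MinWeight.

Theorem lemma6p17 (p : nat) (k r : nat) (H : 'M['F_p]_k) (Hs : 'I_r -> 'M['F_p]_k) :
  prime p -> (0 < r)%N ->
  (H == \bigcap_(i < r) Hs i)%MS ->
  exists i : 'I_r, (mu H <= mu (Hs i))%N.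
Proof.
move=> _ r_gt0 defH.
have [i0 max_i0] : {i0 : 'I_r | \max_i mu (Hs i) = mu (Hs i0)}.
  by apply: bigop.eq_bigmax; rewrite card_ord.
by exists i0; rewrite -max_i0 mu_bigcap_leq_max.
Qed.
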